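(* For every Hopfian group $G$, $SC(G)=C(G)-1$.
   Context: In the category of groups, $X\leqslant^d G$ means there are homomorphisms $f:X\to G$, $g:G\to X$ with $g\circ f=\mathrm{id}_X$; $X<^s G$ means $X\leqslant^d G$ holds but $G\leqslant^d X$ fails. $C(G)$ is the number of isomorphism classes of groups $X$ with $X\leqslant^d G$ and $SC(G)$ the number of isomorphism classes of groups $X$ with $X<^s G$. A group is Hopfian if every surjective endomorphism is an automorphism. *)

Record Group := {
  carrier :> Type;
  op : carrier -> carrier -> carrier;
  e : carrier;
  inv : carrier -> carrier;
  op_assoc : forall x y z, op x (op y z) = op (op x y) z;
  op_e_l : forall x, op e x = x;
  op_e_r : forall x, op x e = x;
  op_inv_l : forall x, op (inv x) x = e;
  op_inv_r : forall x, op x (inv x) = e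
}.

Definition is_hom (X Y : Group) (f : X -> Y) : Prop :=
  forall x y : X, f (op X x y) = op Y (f x) (f y).

Definition dle (X G : Group) : Prop :=
  exists (f : X -> G) (g : G -> X),
    is_hom X G f /\ is_hom G X g /\ (forall x : X, g (f x) = x).

Definition slt (X G : Group) : Prop := dle X G /\ ~ dle G X.

Definition iso (X Y : Group) : Prop :=
  exists (f : X -> Y) (g : Y -> X),
    is_hom X Y f /\ is_hom Y X g /\
    (forall x, g (f x) = x) /\ (forall y, f (g y) = y).

Definition is_automorphism (G : Group) (f : G -> G) : Prop :=
  is_hom G G f /\
  exists g : G -> G, is_hom G G g /\ (forall x, g (f x) = x) /\ (forall x, f (g x) = x).

Definition Hopfian (G : Group) : Prop :=
  forall f : G -> G, is_hom G G f -> (forall y, exists x, f x = y) ->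
    is_automorphism G f.

(* The type of isomorphism classes of groups satisfying P; an isomorphism
   class is represented as the predicate "being isomorphic to X". *)
Definition IsoClasses (P : Group -> Prop) : Type :=
  { c : Group -> Prop | exists X : Group, P X /\ forall Y, c Y <-> iso Y X }.

Definition Cclasses (G : Group) : Type := IsoClasses (fun X => dle X G).
Definition SCclasses (G : Group) : Type := IsoClasses (fun X => slt X G).

Definition equipotent (A B : Type) : Prop :=
  exists f : A -> B, (forall x y, f x = f y -> x = y) /\ (forall y, exists x, f x = y).

From Stdlib Require Import Classical FunctionalExtensionality PropExtensionality ProofIrrelevance.

(* The classes of SC(G) are exactly the classes of C(G) other than that of G
   itself.  The only point needing Hopficity: if X <=^d G via (f, g) and
   G <=^d X via (f', g'), then g' o g is an endomorphism of G with right
   inverse f o f', hence surjective, hence injective; so the retraction g is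
   injective as well, and f, g are mutually inverse. *)

Lemma iso_refl (X : Group) : iso X X.
Proof. exists (fun x => x), (fun x => x). repeat split; intros; reflexivity. Qed.

Lemma iso_sym (X Y : Group) : iso X Y -> iso Y X.
Proof. intros (f & g & hf & hg & hgf & hfg). exists g, f. tauto. Qed.

Lemma iso_trans (X Y Z : Group) : iso X Y -> iso Y Z -> iso X Z.
Proof.
  intros (f & g & hf & hg & hgf & hfg) (f' & g' & hf' & hg' & hgf' & hfg').
  exists (fun x => f' (f x)), (fun z => g (g' z)).
  repeat split; intros.
  - intros a b. rewrite hf, hf'. reflexivity.
  - intros a b. rewrite hg', hg. reflexivity.
  - rewrite hgf', hgf. reflexivity.
  - rewrite hfg, hfg'. reflexivity.
Qed.

Lemma iso_dle (X Y : Group) : iso X Y -> dle X Y.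
Proof. intros (f & g & hf & hg & hgf & _). exists f, g. tauto. Qed.

Lemma iso_of_inj_retraction (X Y : Group) (f : X -> Y) (g : Y -> X) :
  is_hom X Y f -> is_hom Y X g -> (forall x, g (f x) = x) ->
  (forall y y', g y = g y' -> y = y') -> iso X Y.
Proof.
  intros hf hg hgf ginj. exists f, g.
  split; [exact hf | split; [exact hg | split; [exact hgf |]]].
  intros y. apply ginj. rewrite hgf. reflexivity.
Qed.

Lemma Hopfian_surj_inj (G : Group) (h : G -> G) :
  Hopfian G -> is_hom G G h -> (forall y, exists x, h x = y) ->
  forall a b, h a = h b -> a = b.
Proof.
  intros hG hh hsurj a b E.
  destruct (hG h hh hsurj) as [_ (k & _ & hkh & _)].
  rewrite <- (hkh a), <- (hkh b), E. reflexivity.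
Qed.

Lemma Hopfian_dle_antisym (G X : Group) :
  Hopfian G -> dle X G -> dle G X -> iso X G.
Proof.
  intros hG (f & g & hf & hg & hgf) (f' & g' & hf' & hg' & hgf').
  assert (hinj : forall a b, g' (g a) = g' (g b) -> a = b).
  { apply (Hopfian_surj_inj G (fun y => g' (g y)) hG).
    - intros a b. rewrite hg, hg'. reflexivity.
    - intros y. exists (f (f' y)). rewrite hgf, hgf'. reflexivity. }
  apply (iso_of_inj_retraction X G f g hf hg hgf).
  intros a b E. apply hinj. rewrite E. reflexivity.
Qed.

Section IsoClassesTheory.

Variable P : Group -> Prop.

Lemma IsoClasses_eq (c d : IsoClasses P) : proj1_sig c = proj1_sig d -> c = d.
Proof.
  destruct c as [k hk], d as [k' hk']; simpl; intros <-.
  f_equal. apply proof_irrelevance.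
Qed.

Definition class_of (X : Group) (hX : P X) : IsoClasses P :=
  exist _ (fun Y => iso Y X) (ex_intro _ X (conj hX (fun Y => iff_refl (iso Y X)))).

Lemma IsoClasses_rep (c : IsoClasses P) : exists X (hX : P X), c = class_of X hX.
Proof.
  destruct c as [k hk]. pose proof hk as (X & hX & hkX).
  exists X, hX. apply IsoClasses_eq; simpl.
  extensionality Y. apply propositional_extensionality. apply hkX.
Qed.

Lemma class_of_iso (X X' : Group) (hX : P X) (hX' : P X') :
  iso X X' -> class_of X hX = class_of X' hX'.
Proof.
  intros hi. apply IsoClasses_eq; simpl.
  extensionality Y. apply propositional_extensionality.
  split; intros hY.
  - exact (iso_trans _ _ _ hY hi).
  - exact (iso_trans _ _ _ hY (iso_sym _ _ hi)).
Qed.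

Variable Q : Group -> Prop.
Hypothesis PQ : forall X, P X -> Q X.

Definition IsoClasses_incl (c : IsoClasses P) : IsoClasses Q :=
  exist _ (proj1_sig c)
    (let '(ex_intro _ X (conj hX hc)) := proj2_sig c in
     ex_intro _ X (conj (PQ X hX) hc)).

Lemma IsoClasses_incl_inj (c d : IsoClasses P) :
  IsoClasses_incl c = IsoClasses_incl d -> c = d.
Proof. intros E. apply IsoClasses_eq. exact (f_equal (@proj1_sig _ _) E). Qed.

End IsoClassesTheory.

Definition Cclass_self (G : Group) : Cclasses G :=
  class_of (fun X => dle X G) G (iso_dle G G (iso_refl G)).

Definition Cclass_of_SCclass (G : Group) : SCclasses G -> Cclasses G :=
  IsoClasses_incl (fun X => slt X G) (fun X => dle X G) (fun X hX => proj1 hX).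

Lemma Cclass_of_SCclass_neq_self (G : Group) (c : SCclasses G) :
  Cclass_of_SCclass G c <> Cclass_self G.
Proof.
  intros E. apply (f_equal (fun d => proj1_sig d G)) in E. simpl in E.
  destruct c as [k hk]. pose proof hk as (X & [_ hnot] & hkX). simpl in E.
  apply hnot, iso_dle, hkX. rewrite E. apply iso_refl.
Qed.

Lemma Cclasses_cases (G : Group) (hG : Hopfian G) (c : Cclasses G) :
  c = Cclass_self G \/ exists d, c = Cclass_of_SCclass G d.
Proof.
  destruct (IsoClasses_rep _ c) as (X & hX & ->).
  destruct (classic (dle G X)) as [hGX | hnot].
  - left. apply class_of_iso, Hopfian_dle_antisym; assumption.
  - right. exists (class_of (fun Y => slt Y G) X (conj hX hnot)).
    apply IsoClasses_eq. reflexivity.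
Qed.

Theorem corollary3p3 (G : Group) (hG : Hopfian G) :
  equipotent (option (SCclasses G)) (Cclasses G).
Proof.
  exists (fun o => match o with
                   | Some d => Cclass_of_SCclass G d
                   | None => Cclass_self G
                   end).
  split.
  - intros [d|] [d'|] E.
    + f_equal. exact (IsoClasses_incl_inj _ _ _ _ _ E).
    + destruct (Cclass_of_SCclass_neq_self G d E).
    + destruct (Cclass_of_SCclass_neq_self G d' (eq_sym E)).
    + reflexivity.
  - intros c. destruct (Cclasses_cases G hG c) as [-> | [d ->]].
    + exists None. reflexivity.
    + exists (Some d). reflexivity.
Qed.
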